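(* Let $F$ be a field of characteristic zero, $\mathrm{Gr}_n$ the Grassmann algebra of $V=\mathrm{Span}\{e_1,\dots,e_n\}$, and $A_0(n)$ the subalgebra of $\mathrm{Gr}_n$ generated by $V$. Let $R$ be a Rota–Baxter operator of weight zero on $\mathrm{Gr}_n$. Then (a) $R(\mathrm{Gr}_n)\subseteq A_0(n)$; (b) $R(e_1\wedge e_2\wedge\dots\wedge e_n)=0$; (c) $(R(1))^{[(n+1)/2]+1}=0$; (d) $\mathrm{rb}(\mathrm{Gr}_n)\le 2[\tfrac{n+1}{2}]+2$.
   Context: A linear operator $R$ on $A$ is a Rota–Baxter operator of weight $0$ if $R(x)R(y)=R(R(x)y+xR(y))$ for all $x,y\in A$. $[\cdot]$ denotes the integer part. The RB-index $\mathrm{rb}(A)$ is the least $n\in\mathbb N$ such that $R^n=0$ for every Rota–Baxter operator $R$ of weight zero on $A$. *)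

From HB Require Import structures.
From mathcomp Require Import all_boot all_order all_algebra.
Set Implicit Arguments. Unset Strict Implicit. Unset Printing Implicit Defensive.
Import Order.TTheory GRing.Theory Num.Theory.
Local Open Scope ring_scope.

(* The Grassmann algebra Gr_n over F, with basis e_S, S a subset of {0..n-1}
   (e_S = e_{i1} /\ ... /\ e_{ik}, i1 < ... < ik).  An element is the
   function S |-> coefficient of e_S.  Addition / scalar multiplication are
   the pointwise ones of {ffun _ -> F}; the (exterior) product is gr_mul.
   WARNING: do not use the pointwise ring product '*' of ffun; use gr_mul. *)
Notation gr F n := {ffun {set 'I_n} -> (GRing.Field.sort F)^o}.

(* number of inversions when concatenating the (increasing) words S and T *)
Definition gr_inv (n : nat) (S T : {set 'I_n}) : nat :=
  #|[set p : 'I_n * 'I_n | (p.1 \in S) && (p.2 \in T) && (p.2 < p.1)%N]|.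

(* e_S e_T = 0 if S, T intersect, and (-1)^{inv(S,T)} e_{S u T} otherwise *)
Definition gr_mul (F : fieldType) (n : nat) (x y : gr F n) : gr F n :=
  [ffun U : {set 'I_n} =>
     \sum_(S : {set 'I_n}) \sum_(T : {set 'I_n} | [disjoint S & T] && (S :|: T == U))
        (-1) ^+ gr_inv S T * x S * y T].

Definition gr_one (F : fieldType) (n : nat) : gr F n :=
  [ffun S : {set 'I_n} => (S == set0)%:R].

(* generator e_{i+1} *)
Definition gr_e (F : fieldType) (n : nat) (i : 'I_n) : gr F n :=
  [ffun S : {set 'I_n} => (S == [set i])%:R].

Definition gr_top (F : fieldType) (n : nat) : gr F n :=
  \big[@gr_mul F n / gr_one F n]_(i < n) gr_e F i.

Definition gr_exp (F : fieldType) (n : nat) (x : gr F n) (k : nat) : gr F n :=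
  iter k (gr_mul x) (gr_one F n).

Definition in_V (F : fieldType) (n : nat) (x : gr F n) : Prop :=
  exists a : 'I_n -> F, x = \sum_(i < n) a i *: gr_e F i.

Inductive A0 (F : fieldType) (n : nat) : gr F n -> Prop :=
  | A0_V : forall x, in_V x -> A0 x
  | A0_add : forall x y, A0 x -> A0 y -> A0 (x + y)
  | A0_scale : forall (a : F) x, A0 x -> A0 (a *: x)
  | A0_mul : forall x y, A0 x -> A0 y -> A0 (gr_mul x y).

Definition linear_op (F : fieldType) (n : nat) (R : gr F n -> gr F n) : Prop :=
  forall (a : F) (x y : gr F n), R (a *: x + y) = a *: R x + R y.

Definition is_RB0 (F : fieldType) (n : nat) (R : gr F n -> gr F n) : Prop :=
  linear_op R /\
  forall x y : gr F n,
    gr_mul (R x) (R y) = R (gr_mul (R x) y + gr_mul x (R y)).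

(* rb(Gr_n) <= N : the least m with R^m = 0 for all RB operators of weight 0
   exists and is at most N. *)
Definition rb_le (F : fieldType) (n : nat) (N : nat) : Prop :=
  exists m : nat, (m <= N)%N /\
    forall R : gr F n -> gr F n, is_RB0 R -> forall x, iter m R x = 0.

(* (a) If R x had a nonzero constant term, rescaling x would give z with 1 - R z of
   positive degree.  The Newton step z |-> 2 z - (R z z + z R z) squares 1 - R z, so
   finitely many steps reach R z = 1, which the Rota-Baxter identity at (z, z) forbids
   (it would give 1 = 2).  So R lands in the positive-degree ideal, inside A_0(n).
   (b) For u = R (e_1 ... e_n) the identity reduces to R x u = R (x u).  If U is a
   monomial of u of least degree, e_{~U} u = c e_1 ... e_n with c <> 0, hence
   u = R (c^-1 e_{~U}) u, and iterating pushes the degree of u beyond n.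
   (c) A positive-degree v splits into an even part a, which is central and of degree
   >= 2, and an odd part b with b^2 = 0; then v^(m+1) = a^(m+1) + (m+1) a^m b, which
   vanishes for m = [(n+1)/2].
   (d) In any ring, with [Y, R] = Y o R - R o Y and Y_k w = w R(1)^k, the k-fold
   commutator [..[Y_k, R].., R] equals k! R^(2k); so R(1)^k = 0 forces k! R^(2k) = 0. *)

From HB Require Import structures.
From mathcomp Require Import all_boot all_order all_algebra.
From mathcomp Require Import zify.
Import GRing.Theory.
Local Open Scope ring_scope.
Set Implicit Arguments. Unset Strict Implicit.

Lemma exprD_comm_sqr0 (A : nzRingType) (a b : A) m :
  GRing.comm a b -> b * b = 0 -> (a + b) ^+ m.+1 = a ^+ m.+1 + a ^+ m * b *+ m.+1.
Proof.
move=> cab bb0; elim: m => [|m IH]; first by rewrite expr1 expr0 mul1r.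
rewrite exprSr IH mulrDl !mulrDr -exprSr !mulrnAl -!mulrA bb0 mulr0 mul0rn addr0.
by rewrite -cab mulrA -exprSr -addrA -mulrS.
Qed.

Lemma disjointsUl (T : finType) (A B C : {set T}) :
  [disjoint A :|: B & C] = [disjoint A & C] && [disjoint B & C].
Proof. by rewrite -!setI_eq0 setIUl setU_eq0. Qed.

Lemma disjointsUr (T : finType) (A B C : {set T}) :
  [disjoint A & B :|: C] = [disjoint A & B] && [disjoint A & C].
Proof. by rewrite -!setI_eq0 setIUr setU_eq0. Qed.

Section RotaBaxterWeight0.
Variables (A : nzRingType) (R : {additive A -> A}).
Hypothesis RB : forall x y, R x * R y = R (R x * y + x * R y).

Lemma rb_mulR1 x : R (x * R 1) = R x * R 1 - R (R x).
Proof. by rewrite RB mulr1 raddfD addrAC subrr add0r. Qed.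

Lemma rb_newton z : R (z *+ 2 - (R z * z + z * R z)) = 1 - (R z - 1) ^+ 2.
Proof. by rewrite raddfB raddfMn -RB sqrrB1 expr2 opprD addrCA subrr addr0 opprB. Qed.

Lemma rb_neq1 z : R z != 1.
Proof.
apply/eqP => Rz1; have := RB z z; rewrite Rz1 !mul1r mulr1 raddfD Rz1.
by move=> /(congr1 (fun t => t - 1)); rewrite addrK subrr => /eqP; rewrite eq_sym oner_eq0.
Qed.

Definition commR (Y : A -> A) (x : A) : A := Y (R x) - R (Y x).

Lemma eq_iter_commR j Y1 Y2 : Y1 =1 Y2 -> iter j commR Y1 =1 iter j commR Y2.
Proof. by move=> eY; elim: j => [|j IH] x //=; rewrite /commR !IH. Qed.

Lemma iter_commR_eq0 j Y : Y =1 (fun=> 0) -> iter j commR Y =1 (fun=> 0).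
Proof. by move=> Y0; elim: j => [|j IH] x //=; rewrite /commR !IH raddf0 subrr. Qed.

Lemma iter_commRS j Y x :
  iter j.+1 commR Y x = iter j commR Y (R x) - R (iter j commR Y x).
Proof. by []. Qed.

Lemma iter_commR_mulR1 Y j x :
  iter j commR (fun w => Y w * R 1) x =
  iter j commR Y x * R 1 + R (R (iter j.-1 commR Y x)) *+ j.
Proof.
elim: j x => [|j IH] x; first by rewrite addr0.
set P := iter j commR Y x; set X := R (R (iter j.-1 commR Y (R x))) *+ j.
set Z := R (R (R (iter j.-1 commR Y x))) *+ j.
have XZ : X - Z = R (R P) *+ j.
  by case: j {IH} @X @Z @P => [|j] /=; rewrite ?mulr0n ?subr0 // -mulrnBl -!raddfB.
rewrite !iter_commRS !IH raddfD raddfMn rb_mulR1 -/X -/Z -/P mulrBl mulrSr -XZ.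
by rewrite opprD opprB !addrA !(addrAC _ (R (R P))) (addrAC _ X).
Qed.

Lemma iter_commR_mulR1X k x :
  iter k commR (fun w => w * R 1 ^+ k) x = iter k.*2 R x *+ k`! /\
  forall j, (k < j)%N -> iter j commR (fun w => w * R 1 ^+ k) x = 0.
Proof.
elim: k x => [|k IH] x.
  split=> [|[|j] // _]; first by rewrite /= mulr1.
  rewrite iterSr; apply: iter_commR_eq0 => y.
  by rewrite /commR /= !mulr1 subrr.
have eY : (fun w => w * R 1 ^+ k.+1) =1 (fun w => (w * R 1 ^+ k) * R 1).
  by move=> w; rewrite exprSr mulrA.
split=> [|j ltkj]; rewrite (eq_iter_commR _ eY) iter_commR_mulR1.
  rewrite (IH x).2 // mul0r add0r (IH x).1 !raddfMn -mulrnA mulnC -factS.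
  by rewrite doubleS.
rewrite (IH x).2 1?ltnW // (IH x).2 ?raddf0 ?mul0r ?add0r ?mul0rn //.
by case: j ltkj.
Qed.

Lemma rb_iter_nilpotent k x : R 1 ^+ k = 0 -> iter k.*2 R x *+ k`! = 0.
Proof.
move=> rk0; rewrite -(iter_commR_mulR1X k x).1.
by apply: iter_commR_eq0 => w; rewrite rk0 mulr0.
Qed.

End RotaBaxterWeight0.

(* [gr F n] already carries the pointwise ring structure of finite functions; the
   alias [grass F n] is given the exterior product [gr_mul] instead. *)
Definition grass (F : fieldType) (n : nat) : Type := gr F n.
HB.instance Definition _ (F : fieldType) (n : nat) := GRing.Lmodule.on (grass F n).

Section GrassmannRing.
Variables (F : fieldType) (n : nat).
Local Notation G := (grass F n).
Local Notation "x ** y" := (gr_mul x y) (at level 40).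
Implicit Types (x y z : G) (A B C S T U V W : {set 'I_n}).

Definition gr_sign S T : F := (-1) ^+ gr_inv S T.

Definition gr_mono S : G := [ffun U => (U == S)%:R].

Lemma gr_monoE S U : gr_mono S U = (U == S)%:R.
Proof. by rewrite ffunE. Qed.

Lemma gr_mulDl : left_distributive (@gr_mul F n) +%R.
Proof.
move=> x y z; apply/ffunP=> U; rewrite !ffunE -big_split; apply: eq_bigr => S _.
by rewrite -big_split; apply: eq_bigr => T _; rewrite ffunE /= mulrDr mulrDl.
Qed.

Lemma gr_mulDr : right_distributive (@gr_mul F n) +%R.
Proof.
move=> x y z; apply/ffunP=> U; rewrite !ffunE -big_split; apply: eq_bigr => S _.
by rewrite -big_split; apply: eq_bigr => T _; rewrite ffunE /= mulrDr.
Qed.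

Lemma gr_coefZ (a : F) x U : (a *: x) U = a * x U.
Proof. by rewrite ffunE. Qed.

Lemma gr_mulZl (a : F) x y : (a *: x) ** y = a *: (x ** y).
Proof.
apply/ffunP=> U; rewrite gr_coefZ !ffunE mulr_sumr; apply: eq_bigr => S _.
by rewrite mulr_sumr; apply: eq_bigr => T _; rewrite gr_coefZ mulrCA !mulrA.
Qed.

Lemma gr_mulZr (a : F) x y : x ** (a *: y) = a *: (x ** y).
Proof.
apply/ffunP=> U; rewrite gr_coefZ !ffunE mulr_sumr; apply: eq_bigr => S _.
by rewrite mulr_sumr; apply: eq_bigr => T _; rewrite gr_coefZ mulrCA.
Qed.

Lemma gr_mul0l x : 0 ** x = 0.
Proof. by have := gr_mulZl 0 0 x; rewrite !scale0r. Qed.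

Lemma gr_mul0r x : x ** 0 = 0.
Proof. by have := gr_mulZr 0 x 0; rewrite !scale0r. Qed.

Lemma gr_mul_suml I (r : seq I) (P : pred I) (f : I -> G) y :
  (\sum_(i <- r | P i) f i) ** y = \sum_(i <- r | P i) f i ** y.
Proof. by elim/big_rec2: _ => [|i a b _ <-]; rewrite ?gr_mul0l ?gr_mulDl. Qed.

Lemma gr_mul_sumr I (r : seq I) (P : pred I) (f : I -> G) x :
  x ** (\sum_(i <- r | P i) f i) = \sum_(i <- r | P i) x ** f i.
Proof. by elim/big_rec2: _ => [|i a b _ <-]; rewrite ?gr_mul0r ?gr_mulDr. Qed.

Lemma gr_expand x : x = \sum_(S : {set 'I_n}) x S *: gr_mono S.
Proof.
apply/ffunP => U; rewrite sum_ffunE (bigD1 U) //= big1 => [|S nSU].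
  by rewrite gr_coefZ ffunE eqxx mulr1 addr0.
by rewrite gr_coefZ ffunE eq_sym (negbTE nSU) mulr0.
Qed.

Lemma gr_mul_monol V y W : (gr_mono V ** y) W =
  \sum_(T : {set 'I_n} | [disjoint V & T] && (V :|: T == W)) gr_sign V T * y T.
Proof.
rewrite ffunE (bigD1 V) //= [X in _ + X]big1 => [|S nSV]; last first.
  by apply: big1 => T _; rewrite ffunE (negbTE nSV) mulr0 mul0r.
by rewrite addr0; apply: eq_bigr => T _; rewrite ffunE eqxx mulr1.
Qed.

Lemma gr_mul_mono A B : gr_mono A ** gr_mono B =
  if [disjoint A & B] then gr_sign A B *: gr_mono (A :|: B) else 0.
Proof.
apply/ffunP => W; rewrite gr_mul_monol big_mkcond (bigD1 B) //= big1 => [|T nTB].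
  rewrite gr_monoE eqxx mulr1 addr0.
  case: (boolP [disjoint A & B]) => dAB /=; last by rewrite ffunE.
  by rewrite gr_coefZ gr_monoE eq_sym; case: eqP; rewrite ?mulr1 ?mulr0.
by rewrite gr_monoE (negbTE nTB) mulr0 if_same.
Qed.

Lemma gr_invUl A B C : [disjoint A & B] ->
  gr_inv (A :|: B) C = (gr_inv A C + gr_inv B C)%N.
Proof.
move=> dAB; rewrite /gr_inv -cardsUI (_ : _ :&: _ = set0) ?cards0 ?addn0.
  by apply: eq_card => p; rewrite !inE !andb_orl.
apply/setP => p; rewrite !inE; case pA: (p.1 \in A) => //=.
by rewrite (disjointFr dAB pA) andbF.
Qed.

Lemma gr_invUr A B C : [disjoint B & C] ->
  gr_inv A (B :|: C) = (gr_inv A B + gr_inv A C)%N.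
Proof.
move=> dBC; rewrite /gr_inv -cardsUI (_ : _ :&: _ = set0) ?cards0 ?addn0.
  by apply: eq_card => p; rewrite !inE andb_orr andb_orl.
apply/setP => p; rewrite !inE; case pB: (p.2 \in B); rewrite ?andbF //=.
by rewrite (disjointFr dBC pB) !andbF.
Qed.

Lemma gr_sign_assoc A B C : [disjoint A & B] -> [disjoint B & C] ->
  gr_sign A (B :|: C) * gr_sign B C = gr_sign A B * gr_sign (A :|: B) C.
Proof. by move=> dAB dBC; rewrite /gr_sign -!exprD gr_invUr // gr_invUl // addnA. Qed.

Lemma gr_inv_swap S T : [disjoint S & T] ->
  (gr_inv S T + gr_inv T S)%N = (#|S| * #|T|)%N.
Proof.
move=> dST; pose sw (p : 'I_n * 'I_n) := (p.2, p.1).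
have swK : involutive sw by case.
have -> : gr_inv T S =
    #|[set p : 'I_n * 'I_n | (p.1 \in S) && (p.2 \in T) && (p.1 < p.2)%N]|.
  rewrite /gr_inv -(card_preimset _ (inv_inj swK)); apply: eq_card => p.
  by rewrite !inE /= [(p.2 \in T) && _]andbC.
rewrite /gr_inv -(cardsX S T) -cardsUI (_ : _ :&: _ = set0) ?cards0 ?addn0.
  apply: eq_card => -[i j]; rewrite !inE /= -!andb_orr.
  case iS: (i \in S); case jT: (j \in T) => //=.
  rewrite orbC -neq_ltn; apply: contraTneq jT => /val_inj <-.
  by rewrite (disjointFr dST iS).
apply/setP => p; rewrite !inE.
by case: (ltngtP p.1 p.2); rewrite ?andbF.
Qed.

Lemma gr_sign_swap S T : [disjoint S & T] ->
  gr_sign T S = (-1) ^+ (#|S| * #|T|) * gr_sign S T.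
Proof. by move=> dST; rewrite /gr_sign -(gr_inv_swap dST) exprD mulrC signrMK. Qed.

Lemma gr_mul_monoA A B C :
  gr_mono A ** (gr_mono B ** gr_mono C) = (gr_mono A ** gr_mono B) ** gr_mono C.
Proof.
rewrite [gr_mono B ** _]gr_mul_mono [gr_mono A ** gr_mono B]gr_mul_mono.
case dAB: [disjoint A & B]; case dBC: [disjoint B & C];
  rewrite ?gr_mulZl ?gr_mulZr ?gr_mul0l ?gr_mul0r ?gr_mul_mono ?disjointsUl ?disjointsUr;
  rewrite ?dAB ?dBC ?andbF ?scaler0 //= andbT.
case: ifP => _; rewrite ?scaler0 //.
by rewrite !(scalerA (gr_sign _ _)) setUA [gr_sign B C * _]mulrC gr_sign_assoc.
Qed.

Lemma gr_mulA : associative (@gr_mul F n).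
Proof.
move=> x y z; rewrite (gr_expand x) !gr_mul_suml; apply: eq_bigr => A _.
rewrite !gr_mulZl; congr (_ *: _).
rewrite (gr_expand y) !(gr_mul_suml, gr_mul_sumr); apply: eq_bigr => B _.
rewrite gr_mulZl !gr_mulZr gr_mulZl; congr (_ *: _).
rewrite (gr_expand z) !gr_mul_sumr; apply: eq_bigr => C _.
by rewrite !gr_mulZr gr_mul_monoA.
Qed.

Lemma gr_one_mono : gr_one F n = gr_mono set0.
Proof. by apply/ffunP => S; rewrite !ffunE. Qed.

Lemma gr_sign0l S : gr_sign set0 S = 1.
Proof.
rewrite /gr_sign /gr_inv (_ : [set _ | _] = set0) ?cards0 //.
by apply/setP => p; rewrite !inE.
Qed.

Lemma gr_sign0r S : gr_sign S set0 = 1.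
Proof.
rewrite /gr_sign /gr_inv (_ : [set _ | _] = set0) ?cards0 //.
by apply/setP => p; rewrite !inE andbF.
Qed.

Lemma gr_mul1l : left_id (gr_one F n) (@gr_mul F n).
Proof.
move=> x; rewrite [RHS]gr_expand {1}(gr_expand x) gr_mul_sumr; apply: eq_bigr => S _.
by rewrite gr_mulZr gr_one_mono gr_mul_mono -setI_eq0 set0I eqxx gr_sign0l scale1r set0U.
Qed.

Lemma gr_mul1r : right_id (gr_one F n) (@gr_mul F n).
Proof.
move=> x; rewrite [RHS]gr_expand {1}(gr_expand x) gr_mul_suml; apply: eq_bigr => S _.
by rewrite gr_mulZl gr_one_mono gr_mul_mono -setI_eq0 setI0 eqxx gr_sign0r scale1r setU0.
Qed.

Lemma gr_one_neq0 : gr_one F n != 0.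
Proof. by apply/eqP => /ffunP /(_ set0); rewrite !ffunE eqxx => /eqP; rewrite oner_eq0. Qed.

End GrassmannRing.

HB.instance Definition _ (F : fieldType) (n : nat) :=
  GRing.Zmodule_isNzRing.Build (grass F n) (@gr_mulA F n) (@gr_mul1l F n)
    (@gr_mul1r F n) (@gr_mulDl F n) (@gr_mulDr F n) (@gr_one_neq0 F n).
HB.instance Definition _ (F : fieldType) (n : nat) :=
  GRing.Lmodule_isLalgebra.Build F (grass F n) (fun a x y => esym (@gr_mulZl F n a x y)).
HB.instance Definition _ (F : fieldType) (n : nat) :=
  GRing.Lalgebra_isAlgebra.Build F (grass F n) (fun a x y => esym (@gr_mulZr F n a x y)).

Arguments gr_sign {F n}.
Arguments gr_mono {F n}.

Section GrassmannAlgebra.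
Variables (F : fieldType) (n : nat).
Local Notation G := (grass F n).
Implicit Types (x y v : G) (S T U : {set 'I_n}).

Lemma gr_expE x k : gr_exp x k = x ^+ k.
Proof. by elim: k => [|k IH]; rewrite ?expr0 // exprS -IH. Qed.

Lemma gr_mulE x y U : (x * y) U =
  \sum_(S : {set 'I_n}) \sum_(T : {set 'I_n} | [disjoint S & T] && (S :|: T == U))
    gr_sign S T * x S * y T.
Proof. exact: ffunE. Qed.

Lemma gr_mul_monoE S T : gr_mono S * gr_mono T =
  if [disjoint S & T] then gr_sign S T *: gr_mono (S :|: T) else 0 :> G.
Proof. exact: gr_mul_mono. Qed.

(* The cast keeps the coefficients in [F]: typed in [F^o], they would make Rocq pick
   the structures of [grass F^o n], on which the lemmas below do not rewrite. *)
Lemma gr_mul_expand x y : x * y =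
  \sum_(S : {set 'I_n}) \sum_(T : {set 'I_n}) (x S * y T : F) *: (gr_mono S * gr_mono T).
Proof.
rewrite {1}(gr_expand x) {1}(gr_expand y) mulr_suml; apply: eq_bigr => S _.
rewrite -scalerAl mulr_sumr scaler_sumr; apply: eq_bigr => T _.
by rewrite -scalerAr scalerA mulrC.
Qed.

Definition deg_ge (k : nat) x : bool :=
  [forall S : {set 'I_n}, (#|S| < k)%N ==> (x S == 0)].

Lemma deg_geP k x : reflect (forall S, (#|S| < k)%N -> x S = 0) (deg_ge k x).
Proof.
apply: (iffP forallP) => [xk S ltSk | xk S]; first exact/eqP/(implyP (xk S)).
by apply/implyP => /xk ->.
Qed.

Lemma deg_ge0 x : deg_ge 0 x.
Proof. by apply/deg_geP. Qed.

Lemma deg_ge1_const0 x : x set0 = 0 -> deg_ge 1 x.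
Proof. by move=> x0; apply/deg_geP => S; rewrite ltnS leqn0 cards_eq0 => /eqP ->. Qed.

Lemma deg_geW k m x : (m <= k)%N -> deg_ge k x -> deg_ge m x.
Proof.
move=> lemk /deg_geP xk; apply/deg_geP => S ltSm.
by apply: xk; apply: leq_trans lemk.
Qed.

Lemma deg_geD k x y : deg_ge k x -> deg_ge k y -> deg_ge k (x + y).
Proof.
by move=> /deg_geP xk /deg_geP yk; apply/deg_geP => S ltSk; rewrite ffunE xk ?yk ?addr0.
Qed.

Lemma deg_geMn k m x : deg_ge k x -> deg_ge k (x *+ m).
Proof.
move=> /deg_geP xk; apply/deg_geP => S ltSk.
by rewrite -scaler_nat gr_coefZ xk ?mulr0.
Qed.

Lemma deg_geM k m x y : deg_ge k x -> deg_ge m y -> deg_ge (k + m) (x * y).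
Proof.
move=> /deg_geP xk /deg_geP ym; apply/deg_geP => U ltU.
rewrite gr_mulE big1 // => S _; rewrite big1 // => T /andP[dST /eqP eU].
move: ltU; rewrite -eU cardsU (disjoint_setI0 dST) cards0 subn0.
case: (ltnP #|S| k) => [/xk -> | leSk ltU]; first by rewrite mulr0 mul0r.
by rewrite ym ?mulr0 // -(ltn_add2l #|S|) (leq_trans ltU) ?leq_add2r.
Qed.

Lemma deg_geX k m x : deg_ge k x -> deg_ge (k * m) (x ^+ m).
Proof.
move=> xk; elim: m => [|m IH]; first by rewrite muln0 deg_ge0.
by rewrite exprS mulnS; apply: deg_geM.
Qed.

Lemma deg_ge_prod I (r : seq I) (f : I -> G) :
  (forall i, deg_ge 1 (f i)) -> deg_ge (size r) (\prod_(i <- r) f i).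
Proof.
move=> f1; elim: r => [|i r IH]; first exact: deg_ge0.
by rewrite big_cons; apply: (deg_geM (k := 1)).
Qed.

Lemma deg_ge_mono S : deg_ge #|S| (gr_mono S).
Proof.
apply/deg_geP => T ltTS; rewrite gr_monoE.
by case: eqP => // eTS; rewrite eTS ltnn in ltTS.
Qed.

Lemma deg_ge_eq0 x : deg_ge n.+1 x -> x = 0.
Proof.
move=> /deg_geP xn; apply/ffunP => S; rewrite ffunE; apply: xn.
by rewrite ltnS (leq_trans (max_card _)) ?card_ord.
Qed.

Lemma deg_ge_top x : deg_ge n x -> x = x setT *: gr_mono setT.
Proof.
move=> /deg_geP xn; apply/ffunP => S; rewrite gr_coefZ gr_monoE.
have [->|nST] := eqVneq S setT; first by rewrite mulr1.
rewrite mulr0 xn // ltn_neqAle (leq_trans (max_card _)) ?card_ord // andbT.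
by apply: contraNneq nST => cardS; rewrite eqEcard subsetT cardsT card_ord cardS /=.
Qed.

Lemma gr_mono_mulC S T :
  gr_mono S * gr_mono T = (-1) ^+ (#|S| * #|T|) *: (gr_mono T * gr_mono S) :> G.
Proof.
rewrite !gr_mul_monoE disjoint_sym setUC; case: ifP => [dTS|]; last by rewrite scaler0.
by rewrite scalerA gr_sign_swap // mulnC.
Qed.

Definition gr_even x : G := [ffun S : {set 'I_n} => if odd #|S| then 0 else x S].
Definition gr_odd x : G := [ffun S : {set 'I_n} => if odd #|S| then x S else 0].

Lemma gr_evenDodd x : gr_even x + gr_odd x = x.
Proof. by apply/ffunP => S; rewrite !ffunE; case: ifP; rewrite ?add0r ?addr0. Qed.

Lemma gr_even_comm x y : GRing.comm (gr_even x) y.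
Proof.
rewrite /GRing.comm !gr_mul_expand [RHS]exchange_big /=.
apply: eq_bigr => S _; apply: eq_bigr => T _; rewrite ffunE.
have [_|evS] := ifP; first by rewrite !mul0r mulr0 !scale0r.
by rewrite gr_mono_mulC scalerA -signr_odd oddM evS mulr1 mulrC.
Qed.

Lemma gr_odd_sqr (two_neq0 : 2%:R != 0 :> F) x : gr_odd x * gr_odd x = 0.
Proof.
set b := gr_odd x.
have bbN : b * b = - (b * b).
  rewrite {1}gr_mul_expand [in RHS]gr_mul_expand [in RHS]exchange_big -sumrN.
  apply: eq_bigr => S _; rewrite -sumrN; apply: eq_bigr => T _; rewrite !ffunE.
  have [oS|_] := ifP; last by rewrite !mul0r mulr0 !scale0r oppr0.
  have [oT|_] := ifP; last by rewrite !mulr0 mul0r !scale0r oppr0.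
  by rewrite gr_mono_mulC scalerA -signr_odd oddM oS oT expr1 mulrN1 scaleNr mulrC.
have : 2%:R *: (b * b) = 0 by rewrite scaler_nat mulr2n {2}bbN subrr.
by move/eqP; rewrite scaler_eq0 (negbTE two_neq0) => /eqP.
Qed.

Lemma gr_deg_ge1_nilpotent (two_neq0 : 2%:R != 0 :> F) v :
  deg_ge 1 v -> v ^+ ((n.+1)./2).+1 = 0.
Proof.
move=> v1; set m := (n.+1)./2.
have le_n_2m : (n <= 2 * m)%N.
  by have := odd_double_half n.+1; rewrite -/m; case: odd => /=; lia.
have a2 : deg_ge 2 (gr_even v).
  apply/deg_geP => S ltS2; rewrite ffunE; case: ifP => // evS; apply: (deg_geP _ _ v1).
  by move: ltS2 evS; case: #|S| => [|[|]].
have b1 : deg_ge 1 (gr_odd v).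
  by apply/deg_geP => S ltS1; rewrite ffunE (deg_geP _ _ v1) ?if_same.
rewrite -(gr_evenDodd v) exprD_comm_sqr0 ?gr_odd_sqr //; last exact: gr_even_comm.
apply: deg_ge_eq0; apply: deg_geD; first by apply: (deg_geW _ (deg_geX m.+1 a2)); lia.
by apply/deg_geMn/(deg_geW _ (deg_geM (deg_geX m a2) b1)); lia.
Qed.

Lemma gr_mul_mono_complT U y :
  (gr_mono (~: U) * y) setT = gr_sign (~: U) U * y U.
Proof.
rewrite gr_mulE (bigD1 (~: U)) //= [X in _ + X]big1 => [|S nSU]; last first.
  by apply: big1 => T _; rewrite gr_monoE (negbTE nSU) mulr0 mul0r.
rewrite addr0 (big_pred1 U) ?gr_monoE ?eqxx ?mulr1 // => T /=.
rewrite disjoint_sym disjoints_subset setCK; apply/andP/eqP => [[sTU /eqP eT]|->]; last first.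
  by rewrite subxx; split=> //; apply/eqP/setP => i; rewrite !inE orNb.
apply/eqP; rewrite eqEsubset sTU /=; apply/subsetP => i iU.
have : i \in ~: U :|: T by rewrite eT inE.
by rewrite !inE iU.
Qed.

Lemma deg_ge_gr_top : deg_ge n (gr_top F n).
Proof.
have -> : gr_top F n = \prod_(i < n) (gr_mono [set i] : G).
  by apply: eq_bigr => i _; apply/ffunP => S; rewrite !ffunE.
rewrite -[X in deg_ge X]size_enum_ord enumT.
by apply: deg_ge_prod => i; rewrite -(cards1 i); apply: deg_ge_mono.
Qed.

End GrassmannAlgebra.

Section SubalgebraA0.
Variables (F : fieldType) (n : nat).
Local Notation G := (grass F n).

Lemma A0_0 : A0 (0 : G).
Proof. by apply: A0_V; exists (fun=> 0); rewrite big1 // => i _; rewrite scale0r. Qed.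

Lemma A0_mono (S : {set 'I_n}) : S != set0 -> A0 (gr_mono S : G).
Proof.
move cardS: #|S| => k; elim: k S cardS => [|k IH] S cardS nS0.
  by move: nS0; rewrite -cards_eq0 cardS.
have /set0Pn[i iS] := nS0.
have A0_e : A0 (gr_mono [set i] : G).
  apply: A0_V; exists (fun j => (j == i)%:R).
  rewrite (bigD1 i) //= big1 => [|j nji]; last by rewrite (negbTE nji) scale0r.
  by rewrite eqxx scale1r addr0; apply/ffunP => T; rewrite !ffunE.
have [Si0|nSi0] := eqVneq (S :\ i) set0.
  by rewrite -(setD1K iS) Si0 setU0.
have -> : gr_mono S = gr_sign [set i] (S :\ i) *: (gr_mono [set i] * gr_mono (S :\ i) : G).
  by rewrite gr_mul_monoE disjoints1 setD11 setD1K // scalerA /gr_sign -expr2 sqrr_sign scale1r.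
apply/A0_scale/A0_mul => //; apply: IH nSi0.
by move: cardS; rewrite (cardsD1 i) iS => -[].
Qed.

Lemma A0_deg_ge1 (x : G) : deg_ge 1 x -> A0 x.
Proof.
move=> /deg_geP x1; rewrite (gr_expand x); apply: (big_ind (@A0 F n)) => [|y z|S _].
- exact: A0_0.
- exact: A0_add.
have [->|nS0] := eqVneq S set0; first by rewrite x1 ?cards0 // scale0r; exact: A0_0.
exact/A0_scale/A0_mono.
Qed.

End SubalgebraA0.

Section GrassmannRotaBaxter.
Variables (F : fieldType) (n : nat) (R : grass F n -> grass F n).
Hypothesis R_lin : linear R.
Hypothesis R_rb : forall x y, R x * R y = R (R x * y + x * R y).
HB.instance Definition _ := GRing.isLinear.Build F (grass F n) (grass F n) *:%R R R_lin.
Local Notation G := (grass F n).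

Lemma rb_deg_ge1 x : deg_ge 1 (R x).
Proof.
apply: deg_ge1_const0; apply/eqP/negPn/negP => Rx0.
have approx k : exists z, deg_ge k.+1 (1 - R z).
  elim: k => [|k [z zk]].
    exists ((R x set0)^-1 *: x); apply: deg_ge1_const0.
    by rewrite !ffunE linearZ gr_coefZ mulVf // eqxx subrr.
  exists (z *+ 2 - (R z * z + z * R z)); rewrite rb_newton // subKr -opprB sqrrN.
  by apply: (deg_geW _ (deg_geX 2 zk)); rewrite muln2 -addnn addSn ltnS leq_addl.
have [z /deg_ge_eq0 /eqP] := approx n; rewrite subr_eq0 eq_sym => /eqP Rz1.
exact: (elimN eqP (rb_neq1 R_rb z) Rz1).
Qed.

Lemma rb_mono_top : R (gr_mono setT) = 0.
Proof.
set u := R (gr_mono setT).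
have Ru x : R x * u = R (x * u).
  rewrite R_rb (deg_ge_eq0 (x := R x * gr_mono setT)) ?add0r //.
  by apply: (deg_geW _ (deg_geM (rb_deg_ge1 x) (deg_ge_mono _ setT))); rewrite cardsT card_ord.
apply/ffunP => S0; rewrite ffunE; apply/eqP/negPn/negP => uS0.
have [U uU Umin] := arg_minnP (P := fun U => u U != 0) (fun U : {set 'I_n} => #|U|) uS0.
have uU' : deg_ge #|U| u.
  by apply/deg_geP => S ltSU; apply/eqP/negPn/negP => /Umin; rewrite leqNgt ltSU.
have [c ec] : exists c, gr_mono (~: U) * u = c *: gr_mono setT.
  eexists; apply: deg_ge_top; apply: (deg_geW _ (deg_geM (deg_ge_mono _ (~: U)) uU')).
  by rewrite addnC cardsC card_ord.
have c0 : c != 0.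
  have := congr1 (fun w : G => w setT) ec; rewrite /= gr_mul_mono_complT gr_coefZ.
  by rewrite gr_monoE eqxx mulr1 => <-; rewrite mulf_neq0 ?signr_eq0.
have u_fix : u = R (c^-1 *: gr_mono (~: U)) * u.
  by rewrite Ru -scalerAl ec scalerA mulVf // scale1r.
have deg_u k : deg_ge k u.
  elim: k => [|k IH]; first exact: deg_ge0.
  rewrite u_fix; exact: (deg_geM (rb_deg_ge1 _) IH).
by move: uU; rewrite (deg_ge_eq0 (deg_u n.+1)) ffunE eqxx.
Qed.

Lemma rb_gr_top : R (gr_top F n) = 0.
Proof. by rewrite (deg_ge_top (deg_ge_gr_top F n)) linearZ /= rb_mono_top scaler0. Qed.

Hypothesis charF0 : [pchar F] =i pred0.

Lemma rb_R1_nilpotent : R 1 ^+ ((n.+1)./2).+1 = 0.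
Proof. by apply: gr_deg_ge1_nilpotent; [rewrite (pcharf0P F).1 | exact: rb_deg_ge1]. Qed.

Lemma rb_iter_eq0 x : iter ((n.+1)./2).+1.*2 R x = 0.
Proof.
have := rb_iter_nilpotent R_rb x rb_R1_nilpotent.
by rewrite -scaler_nat => /eqP; rewrite scaler_eq0 (pcharf0P F).1 // eqn0Ngt fact_gt0 => /eqP.
Qed.

End GrassmannRotaBaxter.

Theorem lemma14 (F : fieldType) (n : nat)
  (charF0 : [pchar F] =i pred0)
  (R : gr F n -> gr F n) (HR : is_RB0 R) :
  (forall x : gr F n, A0 (R x)) /\
  R (gr_top F n) = 0 /\
  gr_exp (R (gr_one F n)) ((n.+1)./2).+1 = 0 /\
  rb_le F n (2 * (n.+1)./2 + 2)%N.
Proof.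
have [R_lin R_rb] := HR.
split; first by move=> x; apply/A0_deg_ge1/(rb_deg_ge1 R_lin R_rb).
split; first exact: rb_gr_top R_lin R_rb.
split; first by rewrite gr_expE; exact: rb_R1_nilpotent R_lin R_rb charF0.
exists ((n.+1)./2).+1.*2; split; first by rewrite -mul2n mulnSr.
by move=> R' [R'_lin R'_rb] x; exact: rb_iter_eq0 R'_lin R'_rb charF0 x.
Qed.
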